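(* Let $\langle S_1\rangle$ be a good simplex and let $\langle S'\rangle$ be a codimension-one face of $\langle S_1\rangle$ which is not a face of $\Delta_0$. Then $\langle S'\rangle$ is a face of exactly one other good simplex $\langle S_2\rangle$, and $\langle S_1\rangle\cap\langle S_2\rangle=\langle S_1\cap S_2\rangle$.
   Context: Let $k\ge2$, $n=2k-1$, $e_1,\dots,e_k$ the standard basis of $\mathbb R^k$, $r_{(k)}=(r,\dots,r)\in\mathbb R^k$. In $\mathbb R^{2k}$ set $A_j=(e_j,0_{(k)})$, $B_j=\frac1{2n}(2_{(k)}-e_j,2_{(k)}-e_j)$, $C_j=(0_{(k)},e_j)$ for $j=1,\dots,k$; $A,B,C$ the corresponding $k$-element sets and $X=A\cup B\cup C$. $\langle\cdot\rangle$ denotes convex hull. $\Delta_0=\langle A\cup C\rangle$ is the standard simplex. A $2k$-element subset $S\subset X$ is good if it contains no set $\{A_j,B_j,C_j\}$ and $S\ne A\cup C$; a good simplex is $\langle S\rangle$ for a good set $S$ (these are $n$-simplices since good sets are bases of $\mathbb R^{2k}$). *)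

From HB Require Import structures.
From mathcomp Require Import all_boot all_order all_algebra.
From mathcomp Require Import boolp classical_sets reals.
Unset Printing Implicit Defensive.
Import Order.TTheory GRing.Theory Num.Theory.
Local Open Scope ring_scope.

(* Labels of the 3k points of X: (0,j) = A_j, (1,j) = B_j, (2,j) = C_j. *)
Definition label (k : nat) := ('I_3 * 'I_k)%type.

Definition ebasis (R : realType) (k : nat) (j : 'I_k) : 'rV[R]_k := delta_mx 0 j.

(* the points of X in R^(2k) = R^(k+k); n = 2k-1 *)
Definition pt (R : realType) (k : nat) (l : label k) : 'rV[R]_(k + k) :=
  let j := l.2 in
  match val l.1 with
  | 0 => row_mx (@ebasis R k j) 0
  | 1 => ((2 * (2 * k - 1))%N%:R)^-1 *:
           row_mx (const_mx 2 - @ebasis R k j) (const_mx 2 - @ebasis R k j)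
  | _ => row_mx 0 (@ebasis R k j)
  end.

Definition hull (R : realType) (k : nat) (S : {set label k}) : set 'rV[R]_(k + k) :=
  [set x | exists w : label k -> R,
     [/\ (forall l, 0 <= w l), (forall l, l \notin S -> w l = 0),
         \sum_l w l = 1 & x = \sum_l w l *: @pt R k l]].

(* A ∪ C, whose hull is the standard simplex Delta_0 *)
Definition ACset (k : nat) : {set label k} := [set l : label k | val l.1 != 1%N].

Definition good (k : nat) (S : {set label k}) : bool :=
  [&& #|S| == (2 * k)%N,
      [forall j : 'I_k, ~~ [forall i : 'I_3, (i, j) \in S]]
    & S != ACset k].

Definition face_of (R : realType) (k : nat) (F : set 'rV[R]_(k + k))
  (S : {set label k}) : Prop :=
  exists T : {set label k}, T \subset S /\ @hull R k T = F.
Arguments good {k} S.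

From HB Require Import structures.
From mathcomp Require Import all_boot all_order all_algebra.
From mathcomp Require Import boolp classical_sets reals.
From mathcomp Require Import ring lra zify.

(* Points labelled by a set S with no full column are linearly independent:
   for every column j0 and row x there is an explicit linear functional that
   vanishes on the points of S outside column j0 and at (x, j0) but not at the
   two other points of column j0.  Hence the convex hull of such a set is a
   simplex that determines its vertex set.  A good set has 2k points and no
   full column, so each of its columns misses exactly one row.  If
   S1 = a |: S' with a = (r, j), the only other good set containing S' is
   S2 = (y, j) |: S', y the row missing from column j of S1.  When S' contains
   a B point (this is what "<S'> is not a face of Delta_0" gives), the functional
   for column j takes opposite signs at a and at (y, j), so <S1> and <S2> lie
   on opposite sides of the hyperplane spanned by S' and meet exactly in
   <S'>. *)

Import Order.TTheory GRing.Theory Num.Theory.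
Local Open Scope ring_scope.

Section ConvexHull.
Variables (R : realFieldType) (I : finType) (n : nat) (p : I -> 'rV[R]_n).
Local Open Scope classical_set_scope.

Definition conv_hull (S : {set I}) : set 'rV[R]_n :=
  [set x | exists w : I -> R,
     [/\ (forall l, 0 <= w l), (forall l, l \notin S -> w l = 0),
         \sum_l w l = 1 & x = \sum_l w l *: p l]].

Definition dot (u : 'cV[R]_n) (x : 'rV[R]_n) : R := (x *m u) 0 0.

Lemma dot_comb u (w : I -> R) :
  dot u (\sum_l w l *: p l) = \sum_l w l * dot u (p l).
Proof.
by rewrite /dot mulmx_suml summxE; apply: eq_bigr => l _; rewrite -scalemxAl mxE.
Qed.

Lemma dot_comb_vanish {u} {w : I -> R} {S : {set I}} {l} :
  (forall l', l' \notin S -> w l' = 0) ->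
  (forall l', l' \in S -> l' != l -> dot u (p l') = 0) ->
  dot u (\sum_l' w l' *: p l') = w l * dot u (p l).
Proof.
move=> wS uS; rewrite dot_comb (bigD1 l) //= big1 ?addr0 // => l' nl'.
by have [/uS -> // | /wS ->] := boolP (l' \in S); rewrite ?mulr0 ?mul0r.
Qed.

Lemma conv_hullS (U V : {set I}) : U \subset V -> conv_hull U `<=` conv_hull V.
Proof.
move=> sUV x [w [w0 wU w1 ->]]; exists w; split=> // l lV.
by apply: wU; apply: contra lV; apply: (fintype.subsetP sUV).
Qed.

Lemma conv_hull_pt (S : {set I}) l : l \in S -> conv_hull S (p l).
Proof.
move=> lS; exists (fun l' => (l' == l)%:R); split.
- by move=> l'; rewrite ler0n.
- by move=> l' l'S; case: eqP l'S => // ->; rewrite lS.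
- by rewrite (bigD1 l) //= eqxx big1 ?addr0 // => l' /negbTE ->.
- by rewrite (bigD1 l) //= eqxx scale1r big1 ?addr0 // => l' /negbTE ->; rewrite scale0r.
Qed.

(* The points p l, l \in S, are linearly independent. *)
Definition dual_separated (S : {set I}) :=
  forall l, l \in S -> exists u,
    (forall l', l' \in S -> l' != l -> dot u (p l') = 0) /\ dot u (p l) != 0.

Lemma dot_ratio_lt1 {S U : {set I}} {u l} x :
  (forall l', l' \in S -> l' != l -> dot u (p l') = 0) -> dot u (p l) != 0 ->
  U \subset S -> conv_hull U x -> x != p l -> dot u x / dot u (p l) < 1.
Proof.
move=> uS ul sUS [v [v0 vU v1 xE]] xl.
have vS l' : l' \notin S -> v l' = 0.
  by move=> l'S; apply: vU; apply: contra l'S; apply: (fintype.subsetP sUS).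
rewrite xE (dot_comb_vanish vS uS) mulfK //.
move: v1; rewrite (bigD1 l) //= => v1.
have vr0 : 0 <= \sum_(l' | l' != l) v l' by apply: sumr_ge0.
rewrite lt_neqAle (_ : v l <= 1) ?andbT; last by lra.
apply: contraNneq xl => vl1; rewrite xE (bigD1 l) //= vl1 scale1r big1 ?addr0 //.
have /psumr_eq0P vr : \sum_(l' | l' != l) v l' = 0 by lra.
by move=> l' nl'; rewrite vr ?scale0r.
Qed.

(* Normalised to 1 at p l, the functional separating l is < 1 at every p t with
   t \in T, so p l cannot be a convex combination of these points. *)
Lemma conv_hull_vertices (S U T : {set I}) : injective p -> dual_separated S ->
  U \subset S -> conv_hull T = conv_hull U -> U \subset T.
Proof.
move=> p_inj sepS sUS eTU; apply/fintype.subsetP => l lU; apply/negPn/negP => lT.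
have [u [uS ul]] := sepS l (fintype.subsetP sUS l lU).
have ltT t : t \in T -> dot u (p t) / dot u (p l) < 1.
  move=> tT; apply: (dot_ratio_lt1 _ uS ul sUS).
    by rewrite -eTU; apply: conv_hull_pt.
  by apply: contraNneq lT => /p_inj <-.
have [w [w0 wT w1 wl]] : conv_hull T (p l) by rewrite eTU; apply: conv_hull_pt.
have sum0 : \sum_t w t * (1 - dot u (p t) / dot u (p l)) = 0.
  rewrite (eq_bigr (fun t => w t - w t * dot u (p t) / dot u (p l))); last first.
    by move=> t _; rewrite mulrBr mulr1 mulrA.
  by rewrite sumrB w1 -mulr_suml -dot_comb -wl mulfV // subrr.
have term_ge0 t : 0 <= w t * (1 - dot u (p t) / dot u (p l)).
  have [tT|/wT ->] := boolP (t \in T); last by rewrite mul0r.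
  by rewrite mulr_ge0 // subr_ge0 ltW // ltT.
have w_eq0 t : w t = 0.
  have [tT|/wT //] := boolP (t \in T).
  have /eqP := psumr_eq0P (fun t _ => term_ge0 t) sum0 (i := t) isT.
  rewrite mulf_eq0 subr_eq0 => /orP[/eqP //|/eqP h].
  by have := ltT t tT; rewrite -h ltxx.
by move: w1; rewrite big1 // => /esym/eqP; rewrite oner_eq0.
Qed.

Lemma weight_eq0_of_opposite (w1 w2 f1 f2 : R) : 0 <= w1 -> 0 <= w2 ->
  f1 * f2 < 0 -> w1 * f1 = w2 * f2 -> w1 = 0.
Proof.
move=> w10 w20 f12 e.
have f1_sq : 0 < f1 ^+ 2.
  by rewrite exprn_even_gt0 //=; apply: contraTneq f12 => ->; rewrite mul0r ltxx.
have e' : w1 * f1 ^+ 2 = w2 * (f1 * f2) by rewrite expr2 mulrA e; ring.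
nra.
Qed.

Lemma conv_hullI_opposite (F : {set I}) a b u :
  (forall l, l \in F -> dot u (p l) = 0) -> dot u (p a) * dot u (p b) < 0 ->
  conv_hull (a |: F) `&` conv_hull (b |: F) = conv_hull ((a |: F) :&: (b |: F)).
Proof.
move=> uF ab; apply/seteqP; split=> [x [] | x xI]; last first.
  by split; apply: conv_hullS xI; [apply: subsetIl | apply: subsetIr].
move=> [w1 [w10 w1F w11 x1]] [w2 [w20 w2F w21 x2]].
have uF' c l : l \in c |: F -> l != c -> dot u (p l) = 0.
  by rewrite in_setU1 => /orP[/eqP -> /eqP //|/uF].
have w1a : w1 a = 0.
  apply: (weight_eq0_of_opposite _ _ _ _ (w10 a) (w20 b) ab).
  by rewrite -(dot_comb_vanish w1F (uF' a)) -x1 x2 (dot_comb_vanish w2F (uF' b)).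
exists w1; split=> // l; rewrite finset.in_setI negb_and => /orP[/w1F //|].
rewrite !in_setU1 negb_or => /andP[_ lF].
have [-> //|la] := eqVneq l a; by apply: w1F; rewrite in_setU1 (negbTE la).
Qed.
End ConvexHull.

Arguments dot {R n}.
Arguments conv_hull {R I n}.
Arguments dual_separated {R I n}.
Arguments conv_hull_vertices {R I n p S U T}.
Arguments conv_hullI_opposite {R I n p F a b u}.

Lemma subset_card_succ (T : finType) (A B : {set T}) :
  A \subset B -> #|B| = #|A|.+1 -> exists2 z, z \notin A & B = z |: A.
Proof.
move=> sAB cB; have : (0 < #|B :\: A|)%N by rewrite cardsDS // cB subSnn.
case/card_gt0P => z; rewrite !inE => /andP[zA zB]; exists z => //.
apply/eqP; rewrite eq_sym eqEcard finset.subUset finset.sub1set zB sAB /=.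
by rewrite cardsU1 zA cB.
Qed.

Definition iA : 'I_3 := @Ordinal 3 0 isT.
Definition iB : 'I_3 := @Ordinal 3 1 isT.
Definition iC : 'I_3 := @Ordinal 3 2 isT.

Lemma ord3P (i : 'I_3) : [\/ i = iA, i = iB | i = iC].
Proof.
by case: i => [[|[|[|//]]] ?]; [apply: Or31 | apply: Or32 | apply: Or33];
  apply: val_inj.
Qed.

Lemma third_row {a b : 'I_3} : a != b ->
  exists c, [/\ c != a, c != b & forall z, z != a -> z != b -> z = c].
Proof.
case: (ord3P a) => ->; case: (ord3P b) => -> // _;
  [exists iC | exists iB | exists iC | exists iA | exists iB | exists iA];
  by split=> // z; case: (ord3P z) => ->.
Qed.

Section GoodSets.
Variable k : nat.
Implicit Types (S F : {set label k}) (j : 'I_k).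

Definition no_full_column S := forall j, exists y, (y, j) \notin S.

Lemma goodP S :
  reflect [/\ #|S| = (2 * k)%N, no_full_column S & S != ACset k] (good S).
Proof.
apply: (iffP and3P) => [[/eqP cS /forallP nf SAC] | [-> nf SAC]]; split=> //.
  by move=> j; have /forallPn [y yS] := nf j; exists y.
by apply/forallP => j; have [y yS] := nf j; apply/forallPn; exists y.
Qed.

Definition missing_row S j : 'I_3 :=
  if (iA, j) \notin S then iA else if (iC, j) \notin S then iC else iB.

Lemma missing_row_notin S j : no_full_column S -> (missing_row S j, j) \notin S.
Proof.
rewrite /missing_row => nf; case: ifP => // /negbFE AS; case: ifP => // /negbFE CS.
by have [y] := nf j; case: (ord3P y) => ->; rewrite ?AS ?CS.
Qed.

(* The k points (missing_row S i, i) lie outside S, which therefore fills their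
   complement of size 2k; a second missing point in column j would not fit. *)
Lemma good_missing_rowE {S y j} : good S -> (y, j) \notin S -> y = missing_row S j.
Proof.
case/goodP=> cS nf _ yS; apply/eqP/negPn/negP => ymiss.
pose M : {set label k} := [set (missing_row S i, i) | i : 'I_k].
have notM l : l \in M -> l \notin S by case/imsetP=> i _ ->; apply: missing_row_notin.
have yM : (y, j) \notin M.
  by apply/negP => /imsetP[i _ [yE jE]]; move: ymiss; rewrite yE jE eqxx.
have SM : S \subset ~: M :\ (y, j).
  apply/fintype.subsetP => l lS; rewrite !inE; apply/andP; split.
    by apply: contraTneq lS => ->.
  by apply: contraTN lS; apply: notM.
have cM : #|M| = k by rewrite card_imset ?card_ord // => i i' [].
have := subset_leq_card SM.
have := cardsD1 (y, j) (~: M); rewrite finset.in_setC yM cS /=.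
have := cardsC M; rewrite cM card_prod !card_ord => h1 h2 h3.
set c := #|~: M :\ (y, j)| in h2 h3; set d := #|~: M| in h1 h2; lia.
Qed.

Lemma no_full_column_pair (l l' : label k) : no_full_column [set l; l'].
Proof.
move=> j; apply/existsP; apply: contraT; rewrite negb_exists => /forallP full.
have : [set (y, j) | y : 'I_3] \subset [set l; l'].
  apply/fintype.subsetP => _ /imsetP[y _ ->]; by have := full y; rewrite negbK.
move/subset_leq_card; rewrite card_imset ?card_ord => [|y y' [] //].
by rewrite cards2; case: (l != l').
Qed.

Section Flip.
Variables (F : {set label k}) (a : label k) (y : 'I_3).
Hypotheses (gS : good (a |: F)) (aF : a \notin F) (yS : (y, a.2) \notin a |: F).

Lemma good_flip : (exists2 b, b \in F & b.1 = iB) -> good ((y, a.2) |: F).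
Proof.
move=> [b bF bB]; have [cS nf _] := goodP _ gS.
have yF : (y, a.2) \notin F by apply: contra yS; rewrite in_setU1 orbC => ->.
apply/goodP; split.
- by rewrite cardsU1 yF -cS cardsU1 aF.
- move=> j; have [ja|ja] := eqVneq j a.2.
    exists a.1; rewrite ja -surjective_pairing in_setU1 negb_or aF andbT.
    by apply: contraNneq yS => <-; rewrite setU11.
  have [z zS] := nf j; exists z; rewrite in_setU1 negb_or; apply/andP; split.
    by apply: contra ja => /eqP[_ ->].
  by apply: contra zS; rewrite in_setU1 orbC => ->.
- apply/negP => /eqP SAC.
  have : b \in ACset k by rewrite -SAC in_setU1 bF orbT.
  by rewrite inE bB.
Qed.

Lemma good_new_vertex_column S z : good S -> F \subset S -> z \in S ->
  z \notin a |: F -> z.2 = a.2.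
Proof.
move=> gS3 sFS zS zS1; apply/eqP; apply: contraT => za.
have [_ nf3 _] := goodP _ gS3; have [x xS] := nf3 z.2; rewrite -(negbTE xS).
have [xS1|xS1] := boolP ((x, z.2) \in a |: F).
  apply: (fintype.subsetP sFS); move: xS1; rewrite in_setU1 => /orP[/eqP xa|//].
  by rewrite -xa eqxx in za.
have zE : z.1 = missing_row (a |: F) z.2.
  by apply: (good_missing_rowE gS); rewrite -surjective_pairing.
by rewrite (good_missing_rowE gS xS1) -zE -surjective_pairing.
Qed.

Lemma good_neighbors S : good S -> F \subset S ->
  S = a |: F \/ S = (y, a.2) |: F.
Proof.
move=> gS3 sFS; have [cS1 _ _] := goodP _ gS; have [cS3 _ _] := goodP _ gS3.
have [z zF SE] : exists2 z, z \notin F & S = z |: F.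
  by apply: subset_card_succ => //; rewrite cS3 -cS1 cardsU1 aF.
rewrite SE; have [zS1|zS1] := boolP (z \in a |: F).
  by left; move: zS1; rewrite in_setU1 (negbTE zF) orbF => /eqP ->.
right; congr (_ |: F).
have z2 : z.2 = a.2 by apply: good_new_vertex_column gS3 sFS _ zS1; rewrite SE setU11.
have zE : z.1 = missing_row (a |: F) z.2.
  by apply: (good_missing_rowE gS); rewrite -surjective_pairing.
by rewrite (surjective_pairing z) zE z2 -(good_missing_rowE gS yS).
Qed.
End Flip.
End GoodSets.

Arguments missing_row {k}.
Arguments no_full_column {k}.
Arguments goodP {k S}.
Arguments missing_row_notin {k S}.
Arguments good_missing_rowE {k S y j}.
Arguments no_full_column_pair {k}.
Arguments good_flip {k F a y}.
Arguments good_neighbors {k F a y} _ _ _ {S}.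

Section Functionals.
Variables (R : realType) (k : nat).
Implicit Types (S : {set label k}) (al ga : 'I_k -> R).

Definition colv al ga : 'cV[R]_(k + k) := col_mx (\col_i al i) (\col_i ga i).

Lemma dot_colvA al ga j : dot (colv al ga) (pt R k (iA, j)) = al j.
Proof. by rewrite /dot /pt /= mul_row_col mul0mx addr0 /ebasis -rowE !mxE. Qed.

Lemma dot_colvC al ga j : dot (colv al ga) (pt R k (iC, j)) = ga j.
Proof. by rewrite /dot /pt /= mul_row_col mul0mx add0r /ebasis -rowE !mxE. Qed.

Lemma dot_colvB al ga j : dot (colv al ga) (pt R k (iB, j)) =
  (2 * \sum_i (al i + ga i) - (al j + ga j)) / (2 * (2 * k - 1))%:R.
Proof.
have col_sum (f : 'I_k -> R) :
    \sum_i const_mx (2 : R) 0 i * (\col_i f i) i 0 = 2 * \sum_i f i.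
  by rewrite mulr_sumr; apply: eq_bigr => i _; rewrite !mxE.
rewrite /dot /pt /= -scalemxAl mul_row_col !mulmxBl /ebasis -!rowE !mxE mulrC.
by rewrite !col_sum big_split /=; congr (_ / _); ring.
Qed.

Definition colvB (j0 : 'I_k) : 'cV[R]_(k + k) :=
  colv (fun i => (i == j0)%:R) (fun i => - (i == j0)%:R).

Lemma dot_colvB_vanish j0 l :
  l.1 = iB \/ l.2 != j0 -> dot (colvB j0) (pt R k l) = 0.
Proof.
have T0 : \sum_i ((i == j0)%:R - (i == j0)%:R) = 0 :> R.
  by rewrite big1 // => i _; rewrite subrr.
case: l => y j /= [-> | /negbTE jj0].
  by rewrite dot_colvB T0 subrr mulr0 subrr mul0r.
by case: (ord3P y) => ->;
  rewrite ?dot_colvA ?dot_colvB ?dot_colvC ?T0 jj0 /= ?oppr0 ?addr0 ?subr0 ?mulr0 ?mul0r.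
Qed.

Definition off_count S j0 : nat :=
  #|[pred i | (i != j0) && (missing_row S i != iB)]|.

(* Weight of the functional on the A- (r = iA) or C- (r = iC) coordinate of
   column i.  Outside j0 the weight 2 sits on the missing point of the column,
   if it is A or C: this kills the points of S in column i, the B point
   included, since the total weight is 1 (wAC_total) and the value at B_i is
   (2 * total - weight of column i) / 2n.  In column j0 the weight 1 - 2m
   normalises the total and is put on the row of {A, C} other than x. *)
Definition wAC S j0 (x r : 'I_3) (i : 'I_k) : R :=
  if i == j0 then (x != r)%:R * (1 - 2 * (off_count S j0)%:R)
  else 2 * (missing_row S i == r)%:R.

Definition colvAC S j0 x : 'cV[R]_(k + k) := colv (wAC S j0 x iA) (wAC S j0 x iC).

Lemma wAC_total S j0 x : x != iB ->
  \sum_i (wAC S j0 x iA i + wAC S j0 x iC i) = 1.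
Proof.
move=> xB; rewrite (bigD1 j0) //= /wAC eqxx -mulrDl.
have -> : (x != iA)%:R + (x != iC)%:R = 1 :> R.
  by case: (ord3P x) xB => -> //= _; rewrite ?add0r ?addr0.
rewrite mul1r (eq_bigr (fun i => if missing_row S i != iB then 2 else 0)); last first.
  move=> i /negbTE ->; case: (ord3P (missing_row S i)) => ->;
  by rewrite /= ?mulr1n ?mulr0n ?mulr0 ?mulr1 ?addr0 ?add0r.
rewrite -big_mkcondr sumr_const -/(off_count S j0) -mulr_natr; lra.
Qed.

Section ColumnAC.
Variables (S : {set label k}) (j0 : 'I_k) (x : 'I_3).
Hypothesis xB : x != iB.
Let c : R := 1 - 2 * (off_count S j0)%:R.

Lemma dot_colvAC_vanish l : no_full_column S -> l \in S -> l.2 != j0 ->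
  dot (colvAC S j0 x) (pt R k l) = 0.
Proof.
case: l => y i nf yS /= /negbTE ij0.
have miss_y : missing_row S i != y.
  by apply: contraNneq (missing_row_notin i nf) => ->.
case: (ord3P y) miss_y => -> miss_y; rewrite ?dot_colvA ?dot_colvB ?dot_colvC
  ?wAC_total // /wAC ij0 ?(negbTE miss_y) ?mulr0 //.
case: (ord3P (missing_row S i)) miss_y => -> //= _.
  by rewrite mulr1n mulr0n mulr1 mulr0 addr0 subrr mul0r.
by rewrite mulr1n mulr0n mulr1 mulr0 add0r subrr mul0r.
Qed.

Lemma dot_colvAC_col z : z != iB ->
  dot (colvAC S j0 x) (pt R k (z, j0)) = (x != z)%:R * c.
Proof. by case: (ord3P z) => -> // _; rewrite ?dot_colvA ?dot_colvC /wAC eqxx. Qed.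

Lemma dot_colvAC_colB : dot (colvAC S j0 x) (pt R k (iB, j0)) =
  (1 + 2 * (off_count S j0)%:R) / (2 * (2 * k - 1))%:R.
Proof.
rewrite dot_colvB wAC_total // /wAC eqxx -mulrDl.
have -> : (x != iA)%:R + (x != iC)%:R = 1 :> R.
  by case: (ord3P x) xB => -> //= _; rewrite ?add0r ?addr0.
by congr (_ / _); rewrite /c; ring.
Qed.
End ColumnAC.

Lemma column_functional S j0 x : no_full_column S ->
  exists u, [/\ forall l, l \in S -> l.2 != j0 -> dot u (pt R k l) = 0,
    dot u (pt R k (x, j0)) = 0,
    forall z, z != x -> dot u (pt R k (z, j0)) != 0
  & (x = iB \/ exists2 i, i != j0 & (iB, i) \in S) ->
    forall z1 z2, z1 != x -> z2 != x -> z1 != z2 ->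
      dot u (pt R k (z1, j0)) * dot u (pt R k (z2, j0)) < 0].
Proof.
move=> nf; have N_gt0 : 0 < (2 * (2 * k - 1))%:R :> R.
  by rewrite ltr0n; have := ltn_ord j0; lia.
have [-> | xB] := eqVneq x iB.
  have vA : dot (colvB j0) (pt R k (iA, j0)) = 1 by rewrite dot_colvA eqxx.
  have vC : dot (colvB j0) (pt R k (iC, j0)) = -1 by rewrite dot_colvC eqxx.
  exists (colvB j0); split.
  - by move=> l _ lj0; apply: dot_colvB_vanish; right.
  - by apply: dot_colvB_vanish; left.
  - by move=> z; case: (ord3P z) => -> // _; rewrite ?vA ?vC ?oppr_eq0 oner_eq0.
  - move=> _ z1 z2; case: (ord3P z1) => ->; case: (ord3P z2) => -> // _ _ _;
    by rewrite vA vC ?mulN1r ?mulrN1 ?opprK ltrN10.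
pose m := off_count S j0.
have vB : dot (colvAC S j0 x) (pt R k (iB, j0)) =
    (1 + 2 * m%:R) / (2 * (2 * k - 1))%:R by exact: dot_colvAC_colB.
have vB_gt0 : 0 < (1 + 2 * m%:R) / (2 * (2 * k - 1))%:R :> R.
  by rewrite divr_gt0 // ltr_wpDr ?mulr_ge0 ?ler0n ?ltr01.
exists (colvAC S j0 x); split.
- by move=> l; apply: dot_colvAC_vanish.
- by rewrite dot_colvAC_col // eqxx mul0r.
- move=> z zx; have [->|zB] := eqVneq z iB; first by rewrite vB gt_eqF.
  rewrite dot_colvAC_col // (eq_sym x) zx mul1r subr_eq0.
  by rewrite -natrM eq_sym pnatr_eq1; lia.
- case=> [xiB|[i ij0 Bi]] z1 z2; first by rewrite xiB eqxx in xB.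
  have m_gt0 : (0 < m)%N.
    apply/card_gt0P; exists i; rewrite inE ij0 /=.
    by apply: contraNneq (missing_row_notin i nf) => ->.
  have c_lt0 : 1 - 2 * m%:R < 0 :> R.
    by rewrite subr_lt0 -natrM ltr1n; lia.
  have vAC z : z != x -> z != iB ->
      dot (colvAC S j0 x) (pt R k (z, j0)) = 1 - 2 * m%:R.
    by move=> zx zB; rewrite dot_colvAC_col // (eq_sym x) zx mul1r.
  have [c [_ _ cE]] := third_row xB.
  move=> z1x z2x z12; have [z1B|z1B] := eqVneq z1 iB.
    by rewrite z1B vB vAC // 1?eq_sym -?z1B // pmulr_rlt0.
  have z2B : z2 = iB.
    by apply/eqP; apply: contraNT z12 => z2B; rewrite (cE z1 z1x z1B) (cE z2 z2x z2B).
  by rewrite z2B vB vAC // pmulr_llt0.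
Qed.

Lemma no_full_column_separated S : no_full_column S -> dual_separated (pt R k) S.
Proof.
move=> nf l lS; have [y yS] := nf l.2.
have ly : l.1 != y by apply: contraNneq yS => <-; rewrite -surjective_pairing.
have [x [xl xy xE]] := third_row ly.
have [u [u_off u_x u_nz _]] := column_functional _ l.2 x nf.
exists u; split; last by rewrite [l]surjective_pairing u_nz // eq_sym.
move=> l' l'S l'l; have [l'2|] := eqVneq l'.2 l.2; last exact: u_off.
suff -> : l' = (x, l.2) by [].
rewrite [l']surjective_pairing l'2 (xE l'.1) //.
  apply: contraNneq l'l => l'1.
  by rewrite [l']surjective_pairing l'1 l'2 -surjective_pairing.
by apply: contraNneq yS => <-; rewrite -l'2 -surjective_pairing.
Qed.

Lemma pt_inj : injective (pt R k).
Proof.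
move=> l l' E; apply/eqP; apply: contraT => ll'.
have [u [u0 ul]] := no_full_column_separated _ (no_full_column_pair l l') l (setU11 l _).
by move: ul; rewrite E u0 ?eqxx // ?in_set2 ?eqxx ?orbT // eq_sym.
Qed.

Lemma facet_functional F a y : no_full_column (a |: F) -> a \notin F ->
  (y, a.2) \notin a |: F -> (exists2 b, b \in F & b.1 = iB) ->
  exists u, (forall l, l \in F -> dot u (pt R k l) = 0) /\
            dot u (pt R k a) * dot u (pt R k (y, a.2)) < 0.
Proof.
move=> nf aF yS [b bF bB].
have ay : a.1 != y by apply: contraNneq yS => <-; rewrite -surjective_pairing setU11.
have [x [xa xy xE]] := third_row ay.
have Fcol l : l \in F -> l.2 = a.2 -> l.1 = x.
  move=> lF l2; apply: xE.
    apply: contraNneq aF => l1.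
    by rewrite [a]surjective_pairing -l1 -l2 -surjective_pairing.
  by apply: contraNneq yS => <-; rewrite -l2 -surjective_pairing in_setU1 lF orbT.
have [u [u_off u_x _ u_sgn]] := column_functional _ a.2 x nf.
exists u; split.
  move=> l lF; have [l2|l2] := eqVneq l.2 a.2.
    by rewrite [l]surjective_pairing (Fcol l lF l2) l2.
  by apply: u_off; rewrite // in_setU1 lF orbT.
rewrite {1}[a]surjective_pairing; apply: u_sgn; rewrite 1?(eq_sym _ x) //.
have [b2|b2] := eqVneq b.2 a.2; first by left; rewrite -(Fcol b bF b2).
by right; exists b.2; rewrite // -bB -surjective_pairing in_setU1 bF orbT.
Qed.

End Functionals.

Arguments no_full_column_separated {R k S}.
Arguments facet_functional R {k F a y}.

Lemma hullE (R : realType) k : hull R k = conv_hull (pt R k).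
Proof. by []. Qed.

Local Open Scope classical_set_scope.

Theorem mainTheorem7 (R : realType) (k : nat) (hk : (2 <= k)%N)
  (S1 S' : {set label k}) :
  good S1 -> S' \subset S1 -> #|S'| = (2 * k - 1)%N ->
  ~ @face_of R k (@hull R k S') (ACset k) ->
  exists S2 : {set label k},
    [/\ good S2, @hull R k S2 <> @hull R k S1, @face_of R k (@hull R k S') S2,
        (forall S3 : {set label k}, good S3 -> @face_of R k (@hull R k S') S3 ->
            @hull R k S3 = @hull R k S1 \/ @hull R k S3 = @hull R k S2)
      & @hull R k S1 `&` @hull R k S2 = @hull R k (S1 :&: S2)].
Proof.
move=> gS1 sS'1 cS' nface; have [cS1 nf1 _] := goodP gS1.
have [a aS' S1E] : exists2 a, a \notin S' & S1 = a |: S'.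
  by apply: subset_card_succ; rewrite // cS1 cS'; lia.
have [y yS1] := nf1 a.2.
have [b bS' bB] : exists2 b, b \in S' & b.1 = iB.
  have /fintype.subsetPn [b bS' bAC] : ~~ (S' \subset ACset k).
    by apply/negP => sAC; apply: nface; exists S'.
  by exists b => //; apply: val_inj; move: bAC; rewrite inE negbK => /eqP.
rewrite S1E in gS1 nf1 yS1 *; rewrite !hullE.
have vertices := conv_hull_vertices (pt_inj R k) (no_full_column_separated nf1).
exists ((y, a.2) |: S'); split.
- exact: good_flip gS1 aS' yS1 (ex_intro2 _ _ b bS' bB).
- move/(vertices _ _ (subxx _))/fintype.subsetP/(_ a (setU11 _ _)).
  rewrite !in_setU1 (negbTE aS') orbF; apply/negP; apply: contraNneq yS1 => <-.
  by rewrite setU11.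
- by exists S'; rewrite finset.subsetUr.
- move=> S3 gS3 [T [sTS3 eT]].
  have sS'T := vertices _ _ (finset.subsetUr _ _) eT.
  have sS'S3 := fintype.subset_trans sS'T sTS3.
  by case: (good_neighbors gS1 aS' yS1 gS3 sS'S3) => ->; [left | right].
- have [u [uS' u_opp]] := facet_functional R nf1 aS' yS1 (ex_intro2 _ _ b bS' bB).
  exact: conv_hullI_opposite uS' u_opp.
Qed.
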